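(* Let $\pi$ be a uniformly random permutation of $\{1,\dots,m\}$, viewed as an instance of the fully labeled one-dimensional rearrangement problem (LOR). Let $D_S(\pi)$ be the end-effector travel of the plan produced by SweepCyclesLOR, and let $D^*(\pi)$ be the minimum end-effector travel over all valid plans for $\pi$ that use the minimum possible number of pick-n-swaps. Then SweepCyclesLOR minimizes the number of pick-n-swaps and its travel is optimal in the asymptotic sense in expectation: $\mathbb E[D_S(\pi)]/\mathbb E[D^*(\pi)]\to 1$ as $m\to\infty$.
   Context: Setting (LOR). A row of $m$ cells $1,\dots,m$, cell $i$ located at the point $i$ on the real line. Each cell initially holds exactly one item; items carry distinct labels $1,\dots,m$. An instance is a permutation $\pi$ of $\{1,\dots,m\}$, where $\pi_i$ is the label of the item initially in cell $i$; the goal is that item $i$ ends in cell $i$ for every $i$. A robot end-effector can hold at most one item; it starts at the rest position $p_0=$ cell $1$ holding nothing. A pick-n-swap operation performed at a cell $p$ is: if the end-effector holds nothing, pick up the item in $p$; if it holds an item and $p$ contains an item, exchange the two; if it holds an item and $p$ is empty, put the held item into $p$. A plan is a sequence $P=(p_0,p_1,\dots,p_N)$ of cells: the end-effector travels from $p_0$ to $p_1$, performs a pick-n-swap there, travels to $p_2$, and so on, and finally returns to $p_{N+1}:=p_0$. It is valid if at the end every item $i$ is in cell $i$ and the end-effector holds nothing. $N$ is the number of pick-n-swaps and the end-effector travel is $D(P)=\sum_{i=0}^{N}|p_i-p_{i+1}|$. SweepCyclesLOR: while some cell $i$ holds an item with label $\ne i$, let $i$ be the smallest such cell; go to $i$ and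 pick up its item, say with label $g$; while $g\neq i$, go to cell $g$ and swap (item $g$ is placed in cell $g$ and the item previously in cell $g$, with label $g'$, becomes held; set $g:=g'$); finally go to cell $i$ and place the held item. When no misplaced item remains, return to cell $1$. *)

From Stdlib Require Import ClassicalEpsilon.
From mathcomp Require Import all_boot all_order all_algebra all_fingroup.
Set Implicit Arguments. Unset Strict Implicit. Unset Printing Implicit Defensive.

(* Conventions: the m = n.+1 cells 1..m are represented by 'I_n.+1 = {0..n}
   (cell i+1 of the paper is ordinal i); labels likewise.  Since only
   differences of positions matter, travel distances are unchanged.
   The rest position (cell 1) is ord0. *)

Section LOR.
Variable n : nat.
Notation cell := 'I_n.+1.

(* arrangement: content of each cell (None = empty) *)
Definition arrangement := cell -> option cell.

Definition upd (a : arrangement) (p : cell) (v : option cell) : arrangement :=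
  fun j => if j == p then v else a j.

(* state = (arrangement, item held by the end-effector) *)
Definition state := (arrangement * option cell)%type.

(* pick-n-swap at p: the held content (possibly nothing) and the content of p
   are exchanged.  This covers the three cases: pick (hold nothing),
   swap (both items), place (cell p empty). *)
Definition pick_n_swap (s : state) (p : cell) : state :=
  (upd s.1 p s.2, s.1 p).

Definition init_state (pi : 'S_n.+1) : state := (fun i => Some (pi i), None).

Definition run (pi : 'S_n.+1) (plan : seq cell) : state :=
  foldl pick_n_swap (init_state pi) plan.

(* a plan (p_1, ..., p_N) (the rest position p_0 = ord0 is implicit) is valid *)
Definition valid (pi : 'S_n.+1) (plan : seq cell) : bool :=
  [forall i : cell, (run pi plan).1 i == Some i] && ((run pi plan).2 == None).

Definition dist (a b : cell) : nat := (a - b) + (b - a).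

Definition travel (plan : seq cell) : nat :=
  sumn (pairmap dist ord0 (rcons plan ord0)).

(* classical minimum of a predicate on nat (0 if empty) *)
Definition minval (P : pred nat) : nat :=
  match excluded_middle_informative (exists k, P k) with
  | left h => ex_minn h
  | right _ => 0
  end.

Definition Nmin (pi : 'S_n.+1) : nat :=
  minval (fun N => [exists t : N.-tuple cell, valid pi t]).

Definition Dstar (pi : 'S_n.+1) : nat :=
  minval (fun d => [exists t : (Nmin pi).-tuple cell, valid pi t && (travel t == d)]).

(* inner loop: holding label g, starting cell i; returns visited cells and
   the new arrangement *)
Fixpoint follow (fuel : nat) (i : cell) (a : arrangement) (g : cell)
  : seq cell * arrangement :=
  match fuel with
  | 0 => ([::], a)
  | k.+1 =>
    if g == i then ([:: i], upd a i (Some g))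
    else match a g with
         | Some g' => let r := follow k i (upd a g (Some g)) g' in (g :: r.1, r.2)
         | None => ([:: g], upd a g (Some g))
         end
  end.

(* smallest misplaced cell, if any (enum 'I_ is increasing) *)
Definition first_misplaced (a : arrangement) : option cell :=
  ohead [seq i <- enum 'I_n.+1 | a i != Some i].

Fixpoint sweep_aux (fuel : nat) (a : arrangement) : seq cell :=
  match fuel with
  | 0 => [::]
  | f.+1 =>
    match first_misplaced a with
    | None => [::]
    | Some i =>
      match a i with
      | None => [::]
      | Some g =>
        let r := follow n.+1 i (upd a i None) g in
        i :: r.1 ++ sweep_aux f r.2
      end
    end
  end.

(* the plan produced by SweepCyclesLOR (fuel n.+1 suffices: at most m cycles,
   each of length at most m) *)
Definition sweep (pi : 'S_n.+1) : seq cell := sweep_aux n.+1 (init_state pi).1.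

Definition expect (X : 'S_n.+1 -> nat) : rat :=
  ((\sum_(pi : 'S_n.+1) (X pi)%:R) / (n.+1)`!%:R)%R.

End LOR.

From mathcomp Require Import all_boot all_order all_algebra all_fingroup.
From mathcomp Require Import zify.
From Stdlib Require Import ClassicalEpsilon.
Import Order.TTheory GRing.Theory Num.Theory.
Set Implicit Arguments. Unset Strict Implicit. Unset Printing Implicit Defensive.

(* A state is a permutation of the locations (the cells and the end-effector),
   and a pick-n-swap at [p] composes it with the transposition of the
   end-effector and [p]; hence the number of cycles changes by one and
   2 #(fixed cells) - #(cycles) grows by at most one per operation.  It grows
   by exactly one at each operation of SweepCyclesLOR, which only picks
   misplaced items with an empty hand or puts the held item into its own cell,
   so no valid plan is shorter.

   The total distance of the items from their home cells, the held item being
   counted at the end-effector, is unchanged by an operation and moves by at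
   most the distance travelled, so every valid plan travels at least
   sum_j |j - pi j|.  Inside a cycle SweepCyclesLOR always travels to the home
   of the held item, and between cycles it only moves rightwards before
   returning to the rest position, so it travels at most 2(m - 1) more.  As
   E (sum_j |j - pi j|) = (m^2 - 1)/3, the ratio of expectations is at most
   1 + 6/(m + 1). *)

Lemma sum_subn_ord m : 2 * \sum_(j < m) (m - j) = m * m.+1.
Proof.
elim: m => [|m IHm]; first by rewrite big_ord0.
rewrite big_ord_recr /=.
rewrite (eq_bigr (fun j : 'I_m => (m - j) + 1)); last first.
  by move=> j _; have := ltn_ord j; lia.
rewrite big_split /= sum1_card card_ord; move: IHm.
by set X := \sum_(i < m) _; nia.
Qed.

Lemma sum_absdiff_ord m :
  3 * \sum_(j < m) \sum_(k < m) ((j - k) + (k - j)) + m = m ^ 3.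
Proof.
elim: m => [|m IHm]; first by rewrite big_ord0.
set X := \sum_(j < m) \sum_(k < m) _ in IHm *.
have last_col : \sum_(j < m) \sum_(k < m.+1) ((j - k) + (k - j))
                = X + \sum_(j < m) (m - j).
  rewrite -big_split; apply: eq_bigr => j _.
  by rewrite big_ord_recr /=; have := ltn_ord j; lia.
have last_row : \sum_(k < m) ((m - k) + (k - m)) = \sum_(k < m) (m - k).
  by apply: eq_bigr => k _; have := ltn_ord k; lia.
rewrite big_ord_recr /= last_col big_ord_recr /= last_row.
by move: (sum_subn_ord m); set Y := \sum_(j < m) (m - j); nia.
Qed.

Section Plans.
Variable n : nat.
Notation cell := 'I_n.+1.
Notation exec := (foldl (@pick_n_swap n)).

(* Locations are the cells [Some j] and the end-effector [None]. *)
Definition content (s : state n) (o : option cell) : option cell :=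
  if o is Some j then s.1 j else s.2.

Lemma content_pick_n_swap s p :
  content (pick_n_swap s p) =1 content s \o tperm None (Some p).
Proof.
case=> [j|] /=; last by rewrite tpermL.
rewrite /pick_n_swap /upd /=; case: eqP => [->|/eqP neq_jp]; first by rewrite tpermR.
by rewrite tpermD // eq_sym.
Qed.

Lemma injective_content_exec s l :
  injective (content s) -> injective (content (exec s l)).
Proof.
elim: l s => //= p l IHl s inj_s; apply: IHl => x y.
by rewrite !content_pick_n_swap => /inj_s /perm_inj.
Qed.

Lemma injective_content_init (pi : 'S_n.+1) : injective (content (init_state pi)).
Proof. by case=> [x|] [y|] //= [] /perm_inj ->. Qed.

(* The identity when [content s] is not injective, which never happens for
   reachable states. *)
Definition state_perm (s : state n) : {perm option cell} :=
  insubd (1%g : {perm option cell}) [ffun o => content s o].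

Lemma state_permE s : injective (content s) -> state_perm s =1 content s.
Proof.
move=> inj_s x; have inj_ffun : injectiveb [ffun o => content s o].
  by apply/injectiveP => u v; rewrite !ffunE => /inj_s.
by rewrite /state_perm -pvalE insubdK // ffunE.
Qed.

Definition ncycles (s : state n) : nat := #|porbits (state_perm s)|.

Definition nfixed (s : state n) : nat := \sum_(j : cell) (s.1 j == Some j).

Definition potential (s : state n) : int := (Posz (2 * nfixed s) - Posz (ncycles s))%R.

Definition productive (s : state n) (p : cell) : bool :=
  (s.2 == None) && (s.1 p != Some p) || (s.2 == Some p).

Lemma ncycles_pick_n_swap s p : injective (content s) ->
  ncycles (pick_n_swap s p) + 2 * (None \notin porbit (state_perm s) (Some p))
  = (ncycles s).+1.
Proof.
move=> inj_s; have := porbits_mul_tperm (state_perm s) None (Some p).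
rewrite /= addn1 mul2n /ncycles => <-; congr (#|porbits _| + _); apply/permP => x.
rewrite permM !state_permE ?content_pick_n_swap //.
by rewrite -[pick_n_swap s p]/(exec s [:: p]); apply: injective_content_exec.
Qed.

Lemma nfixed_pick_n_swap s p :
  nfixed (pick_n_swap s p) + (s.1 p == Some p) = nfixed s + (s.2 == Some p).
Proof.
rewrite /nfixed (bigD1 p) //= [in RHS](bigD1 p) //= /upd eqxx.
rewrite (eq_bigr (fun j => (s.1 j == Some j : nat))); first by lia.
by move=> j /negPf ->.
Qed.

Lemma potential_ext s t : injective (content s) -> injective (content t) ->
  content s =1 content t -> potential s = potential t.
Proof.
move=> inj_s inj_t eq_st; congr (Posz _ - Posz _)%R.
  by congr (2 * _); apply: eq_bigr => j _; have /= -> := eq_st (Some j).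
by congr #|porbits _|; apply/permP => x; rewrite !state_permE.
Qed.

Lemma porbit_held s p : injective (content s) -> s.2 = Some p ->
  None \in porbit (state_perm s) (Some p).
Proof.
move=> inj_s held_p; have <- : state_perm s None = Some p by rewrite state_permE.
by rewrite porbit_sym; apply/porbitP; exists 1%N; rewrite expg1.
Qed.

Lemma held_misplaced s x : injective (content s) -> s.2 = Some x -> s.1 x != Some x.
Proof.
move=> inj_s held_x; apply/eqP => fixed_x.
by have /inj_s : content s None = content s (Some x) by rewrite /= held_x fixed_x.
Qed.

Lemma potential_pick_n_swap_le s p : injective (content s) ->
  (potential (pick_n_swap s p) <= potential s + 1)%R.
Proof.
move=> inj_s; have := ncycles_pick_n_swap p inj_s; have := nfixed_pick_n_swap s p.
rewrite /potential; have [/(porbit_held inj_s) -> | _] := eqVneq s.2 (Some p).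
  by case: (_ == _) => /=; lia.
by case: (_ \notin _); case: (_ == _) => /=; lia.
Qed.

(* Picking a misplaced item with an empty hand merges the fixed point [None]
   into a cycle; placing the held item into its own cell splits its cycle. *)
Lemma potential_pick_n_swap_productive s p : injective (content s) ->
  productive s p -> potential (pick_n_swap s p) = (potential s + 1)%R.
Proof.
move=> inj_s prod_p; have := ncycles_pick_n_swap p inj_s.
have := nfixed_pick_n_swap s p; rewrite /potential.
have [held_p|not_held] := eqVneq s.2 (Some p).
  by rewrite (negbTE (held_misplaced inj_s held_p)) porbit_held //; lia.
move: prod_p; rewrite /productive (negbTE not_held) orbF.
case/andP=> /eqP empty /negPf ->.
have -> : None \notin porbit (state_perm s) (Some p).
  rewrite porbit_sym; apply/porbitP => -[i] /esym.
  by rewrite permX_fix // state_permE //= empty.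
lia.
Qed.

Fixpoint plan_all (P : state n -> cell -> bool) (s : state n) (l : seq cell) :=
  if l is p :: l' then P s p && plan_all P (pick_n_swap s p) l' else true.

Lemma plan_all_cat P s l1 l2 :
  plan_all P s (l1 ++ l2) = plan_all P s l1 && plan_all P (exec s l1) l2.
Proof. by elim: l1 s => //= p l IHl s; rewrite IHl andbA. Qed.

Lemma sub_plan_all (P Q : state n -> cell -> bool) s l :
  (forall s p, P s p -> Q s p) -> plan_all P s l -> plan_all Q s l.
Proof.
move=> PQ; elim: l s => //= p l IHl s /andP [Psp Pl].
by rewrite PQ //; apply: IHl.
Qed.

Lemma potential_exec_le s l : injective (content s) ->
  (potential (exec s l) <= potential s + Posz (size l))%R.
Proof.
elim: l s => [|p l IHl] s inj_s /=; first by rewrite addr0.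
have := potential_pick_n_swap_le p inj_s.
have := IHl (pick_n_swap s p) (@injective_content_exec _ [:: p] inj_s); lia.
Qed.

Lemma potential_exec_productive s l : injective (content s) ->
  plan_all productive s l -> potential (exec s l) = (potential s + Posz (size l))%R.
Proof.
elim: l s => [|p l IHl] s inj_s /=; first by rewrite addr0.
case/andP=> /(potential_pick_n_swap_productive inj_s) step_p prod_l.
by rewrite (IHl _ (@injective_content_exec _ [:: p] inj_s) prod_l) step_p; lia.
Qed.

Lemma productive_plan_shortest s l l' : injective (content s) ->
  plan_all productive s l -> content (exec s l) =1 content (exec s l') ->
  size l <= size l'.
Proof.
move=> inj_s prod_l same_end; have := potential_exec_le l' inj_s.
rewrite -(potential_ext _ _ same_end) ?potential_exec_productive //; first lia.
all: exact: injective_content_exec.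
Qed.

Lemma productive_exec_fixed s l j : plan_all productive s l ->
  s.1 j = Some j -> (exec s l).1 j = Some j.
Proof.
elim: l s => //= p l IHl s /andP [prod_p prod_l] fixed_j; apply: IHl => //.
rewrite /pick_n_swap /upd /=; case: eqP => [eq_jp|//]; subst j.
by move: prod_p; rewrite /productive fixed_j eqxx andbF => /eqP.
Qed.

Definition solved (s : state n) : bool :=
  [forall j, s.1 j == Some j] && (s.2 == None).

Lemma solved_content s t : solved s -> solved t -> content s =1 content t.
Proof.
case/andP=> /forallP fixed_s /eqP empty_s /andP [/forallP fixed_t /eqP empty_t].
by case=> [j|] /=; [rewrite (eqP (fixed_s j)) (eqP (fixed_t j)) | rewrite empty_s].
Qed.

Definition home_dist (j : cell) (o : option cell) : nat :=
  if o is Some x then dist j x else 0.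

(* [q] is the position of the end-effector, hence of the held item. *)
Definition displacement (s : state n) (q : cell) : nat :=
  \sum_j home_dist j (s.1 j) + home_dist q s.2.

Lemma displacement_pick_n_swap s p :
  displacement (pick_n_swap s p) p = displacement s p.
Proof.
rewrite /displacement (bigD1 p) //= [in RHS](bigD1 p) //= /upd eqxx.
rewrite (eq_bigr (fun j => home_dist j (s.1 j))); first by lia.
by move=> j /negPf ->.
Qed.

Lemma displacement_move s p q : displacement s p <= dist p q + displacement s q.
Proof. by rewrite /displacement; case: s.2 => [x|] /=; rewrite /dist; lia. Qed.

Lemma displacement_held s p x :
  s.2 = Some x -> displacement s p = dist p x + displacement s x.
Proof. by rewrite /displacement => -> /=; rewrite /dist; lia. Qed.

Lemma displacement_empty s p q : s.2 = None -> displacement s p = displacement s q.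
Proof. by rewrite /displacement => ->. Qed.

Lemma displacement_solved s q : solved s -> displacement s q = 0.
Proof.
case/andP=> /forallP fixed_s /eqP empty_s; rewrite /displacement empty_s addn0.
by apply: big1 => j _; rewrite (eqP (fixed_s j)) /= /dist; lia.
Qed.

Definition path_length (p : cell) (l : seq cell) : nat := sumn (pairmap (@dist n) p l).

Lemma path_length_cat p l1 l2 :
  path_length p (l1 ++ l2) = path_length p l1 + path_length (last p l1) l2.
Proof.
by elim: l1 p => //= x l IHl p; rewrite /path_length /= -!/(path_length _ _) IHl addnA.
Qed.

Lemma displacement_le_path_length s p q l :
  displacement s p <= path_length p (rcons l q) + displacement (exec s l) q.
Proof.
elim: l s p => [|x l IHl] s p /=.
  by rewrite /path_length /= addn0 displacement_move.
rewrite /path_length /= -/(path_length _ _).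
have := displacement_move s p x; rewrite -(displacement_pick_n_swap s x).
have := IHl (pick_n_swap s x) x; lia.
Qed.

Definition delivering (s : state n) (p : cell) : bool := s.2 == Some p.

Lemma delivering_productive s p : delivering s p -> productive s p.
Proof. by rewrite /productive /delivering => ->; rewrite orbT. Qed.

Lemma path_length_delivering s p l : plan_all delivering s l ->
  path_length p l + displacement (exec s l) (last p l) = displacement s p.
Proof.
elim: l s p => //= x l IHl s p /andP [/eqP held_x deliv_l].
rewrite /path_length /= -/(path_length _ _) -addnA IHl //.
by rewrite displacement_pick_n_swap (displacement_held p held_x).
Qed.

Definition nmisplaced (a : arrangement n) : nat := \sum_(j : cell) (a j != Some j).

Lemma nmisplaced_le a : nmisplaced a <= n.+1.
Proof.
rewrite /nmisplaced -[X in _ <= X]card_ord -sum1_card.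
by apply: leq_sum => j _; exact: leq_b1.
Qed.

Lemma nmisplaced_lt a a' i : (forall j, a j = Some j -> a' j = Some j) ->
  a i != Some i -> a' i = Some i -> nmisplaced a' < nmisplaced a.
Proof.
move=> keep_fixed mis_i fixed_i.
rewrite /nmisplaced (bigD1 i) //= [X in _ < X](bigD1 i) //= fixed_i eqxx mis_i.
rewrite add0n add1n ltnS; apply: leq_sum => j _.
by case: (eqVneq (a j) (Some j)) => [/keep_fixed -> | _]; rewrite ?eqxx ?leq_b1.
Qed.

Lemma follow_spec k i b g :
  injective (content (b, Some g)) -> b i = None -> nmisplaced b <= k ->
  let: (l, b') := follow k i b g in
  [/\ exec (b, Some g) l = (b', None), plan_all delivering (b, Some g) l,
      forall x, last x l = i & b' i = Some i].
Proof.
elim: k b g => [|k IHk] b g inj_b empty_i.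
  by rewrite /nmisplaced (bigD1 i) //= empty_i.
move=> mis_b /=; have [->|neq_gi] := eqVneq g i.
  by rewrite /pick_n_swap /upd /delivering /= empty_i !eqxx.
case def_g': (b g) => [g'|]; last first.
  have /inj_b [eq_gi] : content (b, Some g) (Some g) = content (b, Some g) (Some i).
    by rewrite /= def_g' empty_i.
  by rewrite eq_gi eqxx in neq_gi.
have step_g : pick_n_swap (b, Some g) g = (upd b g (Some g), Some g').
  by rewrite /pick_n_swap /= def_g'.
have misplaced_g : b g != Some g := held_misplaced inj_b erefl.
have inj_b' : injective (content (upd b g (Some g), Some g')).
  by rewrite -step_g; apply: (@injective_content_exec _ [:: g]).
have empty_i' : upd b g (Some g) i = None.
  by rewrite /upd eq_sym (negbTE neq_gi).
have mis_b' : nmisplaced (upd b g (Some g)) <= k.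
  rewrite -ltnS; apply: leq_trans mis_b; apply: nmisplaced_lt misplaced_g _.
    by move=> j; rewrite /upd; case: eqP => [->|].
  by rewrite /upd eqxx.
have := IHk _ _ inj_b' empty_i' mis_b'.
case: (follow k i _ g') => l b' [exec_l deliv_l last_l fixed_i].
by rewrite /= step_g /delivering eqxx.
Qed.

Lemma mem_misplaced (a : arrangement n) j :
  (j \in [seq i <- enum 'I_n.+1 | a i != Some i]) = (a j != Some j).
Proof. by rewrite mem_filter mem_enum andbT. Qed.

Lemma first_misplaced_None (a : arrangement n) :
  first_misplaced a = None -> forall j, a j = Some j.
Proof.
rewrite /first_misplaced => no_mis j; apply/eqP/negPn; rewrite -mem_misplaced.
by case: [seq i <- _ | _] no_mis.
Qed.

Lemma first_misplaced_Some (a : arrangement n) i : first_misplaced a = Some i ->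
  a i != Some i /\ forall j : cell, j < i -> a j = Some j.
Proof.
have lt_trans : transitive (relpre (@nat_of_ord n.+1) ltn).
  by move=> y x z; apply: ltn_trans.
have : sorted (relpre val ltn) [seq i <- enum 'I_n.+1 | a i != Some i].
  by rewrite sorted_filter // -sorted_map val_enum_ord iota_ltn_sorted.
rewrite /first_misplaced; have := mem_misplaced a.
case: [seq i <- _ | _] => //= x l mem_l sorted_l [<-].
split=> [|j lt_jx]; first by rewrite -mem_l mem_head.
apply/eqP/negPn; rewrite -mem_l in_cons negb_or neq_ltn lt_jx /=.
apply/negP => /(allP (order_path_min lt_trans sorted_l)) /=.
by rewrite ltnNge (ltnW lt_jx).
Qed.

Lemma sweep_cycle_spec a i g :
  injective (content (a, None)) -> a i != Some i -> a i = Some g ->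
  let: (l, a') := follow n.+1 i (upd a i None) g in
  [/\ exec (a, None) (i :: l) = (a', None), plan_all productive (a, None) (i :: l),
      forall x, last x l = i,
      path_length i l + displacement (a', None) ord0 = displacement (a, None) ord0 &
      (forall j, a j = Some j -> a' j = Some j) /\ a' i = Some i].
Proof.
move=> inj_a mis_i def_g.
have step_i : pick_n_swap (a, None) i = (upd a i None, Some g).
  by rewrite /pick_n_swap /= def_g.
have inj_b : injective (content (upd a i None, Some g)).
  by rewrite -step_i; apply: (@injective_content_exec _ [:: i]).
have empty_i : upd a i None i = None by rewrite /upd eqxx.
have := follow_spec inj_b empty_i (nmisplaced_le _).
case: (follow _ _ _ _) => l a' [exec_l deliv_l last_l fixed_i].
have prod_l : plan_all productive (upd a i None, Some g) l.
  exact: sub_plan_all delivering_productive deliv_l.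
split=> //; first by rewrite /= step_i.
- by rewrite /= /productive mis_i step_i prod_l.
- rewrite !(@displacement_empty _ ord0 i) //.
  rewrite -[displacement (a, None) i](displacement_pick_n_swap _ i) step_i.
  by have := path_length_delivering i deliv_l; rewrite exec_l last_l.
split=> // j; have [-> //|neq_ji fixed_j] := eqVneq j i.
have := productive_exec_fixed (j := j) prod_l; rewrite exec_l; apply.
by rewrite /upd /= (negbTE neq_ji).
Qed.

(* [p] is the start of the previous cycle: the cycles start further and further
   right, so the moves between them sum to at most [n - p], and the return to
   the rest position costs at most [n]. *)
Lemma sweep_aux_spec f a (p : cell) :
  injective (content (a, None)) -> nmisplaced a <= f ->
  (forall j : cell, j < p -> a j = Some j) ->
  let l := sweep_aux f a in
  [/\ solved (exec (a, None) l), plan_all productive (a, None) l &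
      path_length p (rcons l ord0) + p <= displacement (a, None) ord0 + 2 * n].
Proof.
have solved_case (a' : arrangement n) (p' : cell) : (forall j, a' j = Some j) ->
    [/\ solved (a', None), true &
        path_length p' [:: ord0] + p' <= displacement (a', None) ord0 + 2 * n].
  move=> fixed; split=> //.
    by apply/andP; split=> //; apply/forallP => j /=; rewrite fixed.
  have := ltn_ord p'; rewrite /path_length /= /dist (_ : nat_of_ord ord0 = 0) //; lia.
elim: f a p => [|f IHf] a p inj_a mis_a fixed_lt_p.
  apply: solved_case => j; apply/eqP; move: mis_a.
  by rewrite /nmisplaced (bigD1 j) //=; case: eqP.
cbn [sweep_aux]; case def_i: (first_misplaced a) => [i|]; last first.
  exact/solved_case/first_misplaced_None.
have [mis_i fixed_lt_i] := first_misplaced_Some def_i.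
case def_g: (a i) => [g|]; last first.
  have /inj_a // : content (a, None) (Some i) = content (a, None) None.
  by rewrite /= def_g.
have := sweep_cycle_spec inj_a mis_i def_g.
case: (follow _ _ _ _) => l a' [exec_il prod_il last_l length_l [keep_fixed fixed_i]].
have inj_a' : injective (content (a', None)).
  by rewrite -exec_il; apply: injective_content_exec.
have mis_a' : nmisplaced a' <= f.
  by rewrite -ltnS; apply: leq_trans mis_a; apply: nmisplaced_lt mis_i fixed_i.
have fixed_lt_i' (j : cell) : j < i -> a' j = Some j by move/fixed_lt_i/keep_fixed.
have [solved_rest prod_rest length_rest] := IHf a' i inj_a' mis_a' fixed_lt_i'.
have le_pi : p <= i.
  by rewrite leqNgt; apply/negP => /fixed_lt_p fixed_i'; rewrite fixed_i' eqxx in mis_i.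
rewrite -cat_cons foldl_cat exec_il plan_all_cat exec_il prod_il; split=> //.
rewrite /= rcons_cat -cat_cons path_length_cat /= last_l.
have -> : path_length p (i :: l) = dist p i + path_length i l by [].
move: length_l length_rest; rewrite /dist; lia.
Qed.

Lemma sweep_spec (pi : 'S_n.+1) :
  [/\ valid pi (sweep pi), plan_all productive (init_state pi) (sweep pi) &
      travel (sweep pi) <= displacement (init_state pi) ord0 + 2 * n].
Proof.
have [] := @sweep_aux_spec n.+1 _ ord0 (@injective_content_init pi) (nmisplaced_le _).
  by move=> j; rewrite ltn0.
by rewrite addn0.
Qed.

Lemma sweep_size_le (pi : 'S_n.+1) plan : valid pi plan -> size (sweep pi) <= size plan.
Proof.
have [valid_sweep prod_sweep _] := sweep_spec pi => valid_plan.
exact: productive_plan_shortest (@injective_content_init pi) prod_sweep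
  (solved_content valid_sweep valid_plan).
Qed.

Lemma travel_ge_displacement (pi : 'S_n.+1) plan :
  valid pi plan -> displacement (init_state pi) ord0 <= travel plan.
Proof.
move=> valid_plan; have := displacement_le_path_length (init_state pi) ord0 ord0 plan.
by rewrite (@displacement_solved (run pi plan)) // addn0.
Qed.

Lemma minvalP (P : pred nat) k : P k -> P (minval P) /\ minval P <= k.
Proof.
move=> Pk; rewrite /minval.
case: excluded_middle_informative => [ex_P|[]]; last by exists k.
by case: ex_minnP => m Pm min_m; split=> //; apply: min_m.
Qed.

Lemma Nmin_sweep (pi : 'S_n.+1) : Nmin pi = size (sweep pi).
Proof.
have [valid_sweep _ _] := sweep_spec pi.
have witness : [exists t : (size (sweep pi)).-tuple cell, valid pi t].
  by apply/existsP; exists (in_tuple (sweep pi)).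
have [/existsP [t valid_t] le_sweep] :=
  minvalP (P := fun N => [exists t : N.-tuple cell, valid pi t]) witness.
by apply/eqP; rewrite /Nmin eqn_leq le_sweep -(size_tuple t) sweep_size_le.
Qed.

Lemma Dstar_bounds (pi : 'S_n.+1) :
  displacement (init_state pi) ord0 <= Dstar pi <= travel (sweep pi).
Proof.
have [valid_sweep _ _] := sweep_spec pi.
have size_sweep : size (sweep pi) == Nmin pi by rewrite Nmin_sweep.
have witness : [exists t : (Nmin pi).-tuple cell,
                  valid pi t && (travel t == travel (sweep pi))].
  by apply/existsP; exists (Tuple size_sweep); rewrite /= valid_sweep eqxx.
have [/existsP [t /andP [valid_t /eqP travel_t]] le_sweep] := minvalP
  (P := fun d => [exists t : (Nmin pi).-tuple cell, valid pi t && (travel t == d)])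
  witness.
by rewrite /Dstar le_sweep andbT -travel_t travel_ge_displacement.
Qed.

Lemma sum_perm_value (F : cell -> nat) (j : cell) :
  n.+1 * \sum_(pi : 'S_n.+1) F (pi j) = n.+1`! * \sum_k F k.
Proof.
pose fiber k := \sum_(pi : 'S_n.+1) (pi j == k).
have fiberE k : fiber k = fiber j.
  rewrite /fiber (reindex_inj (mulIg (tperm j k))); apply: eq_bigr => pi _.
  by rewrite permM -[X in _ == X](tpermL j k) (inj_eq perm_inj).
have sum_fiber (G : cell -> nat) (pi : 'S_n.+1) : \sum_k (pi j == k) * G k = G (pi j).
  rewrite (bigD1 (pi j)) //= eqxx mul1n big1 ?addn0 // => k neq_k.
  by rewrite eq_sym (negbTE neq_k).
have card_fiber : n.+1 * fiber j = n.+1`!.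
  transitivity (\sum_(k : cell) fiber k).
    by rewrite (eq_bigr _ (fun k _ => fiberE k)) sum_nat_const card_ord.
  rewrite /fiber exchange_big /= -card_Sn -sum1_card; apply: eq_bigr => pi _.
  by rewrite -(sum_fiber (fun=> 1) pi); apply: eq_bigr => k _; rewrite muln1.
rewrite (eq_bigr (fun pi : 'S_n.+1 => \sum_k (pi j == k) * F k)); last first.
  by move=> pi _; rewrite sum_fiber.
rewrite exchange_big /=.
under eq_bigr do rewrite -big_distrl /= -/(fiber _) fiberE.
by rewrite -big_distrr /= mulnA card_fiber.
Qed.

Lemma sum_displacement_init :
  3 * \sum_(pi : 'S_n.+1) displacement (init_state pi) ord0 = n.+1`! * (n * n.+2).
Proof.
apply/eqP; rewrite -(eqn_pmul2l (ltn0Sn n)); apply/eqP.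
rewrite mulnCA /displacement /=.
under eq_bigr do rewrite addn0.
rewrite exchange_big big_distrr /=.
under eq_bigr do rewrite sum_perm_value.
rewrite -big_distrr /= mulnCA [RHS]mulnCA; congr (_ * _).
have := sum_absdiff_ord n.+1; rewrite /dist.
by set S := \sum_(j < n.+1) _; nia.
Qed.

Lemma sum_displacement_le_Dstar :
  \sum_(pi : 'S_n.+1) displacement (init_state pi) ord0 <= \sum_(pi : 'S_n.+1) Dstar pi.
Proof. by apply: leq_sum => pi _; case/andP: (Dstar_bounds pi). Qed.

Lemma sum_Dstar_gt0 : 0 < n -> 0 < \sum_(pi : 'S_n.+1) Dstar pi.
Proof.
move=> n_gt0; apply: leq_trans sum_displacement_le_Dstar.
by have := sum_displacement_init; have := fact_gt0 n.+1; nia.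
Qed.

Lemma sum_Dstar_le_travel_sweep :
  \sum_(pi : 'S_n.+1) Dstar pi <= \sum_(pi : 'S_n.+1) travel (sweep pi).
Proof. by apply: leq_sum => pi _; case/andP: (Dstar_bounds pi). Qed.

Lemma sum_travel_sweep_gap :
  (\sum_(pi : 'S_n.+1) travel (sweep pi) - \sum_(pi : 'S_n.+1) Dstar pi) * n.+2
  <= 6 * \sum_(pi : 'S_n.+1) Dstar pi.
Proof.
have := sum_displacement_init; have := sum_displacement_le_Dstar.
set A := \sum_(pi : 'S_n.+1) displacement _ _.
set S := \sum_(pi : 'S_n.+1) travel _; set D := \sum_(pi : 'S_n.+1) Dstar _.
move=> le_AD sumA; have le_gap : S - D <= n.+1`! * (2 * n).
  rewrite leq_subLR; apply: (@leq_trans (A + n.+1`! * (2 * n))).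
    rewrite -card_Sn -sum_nat_const -big_split /=; apply: leq_sum => pi _.
    by case: (sweep_spec pi).
  by rewrite leq_add2r.
by apply: leq_trans (leq_mul le_gap (leqnn n.+2)) _; nia.
Qed.
End Plans.

Local Open Scope ring_scope.

Lemma expect_ratio n (X Y : 'S_n.+1 -> nat) :
  expect X / expect Y = (\sum_pi X pi)%:R / (\sum_pi Y pi)%:R.
Proof.
have fact_neq0 : (n.+1)`!%:R != 0 :> rat by rewrite pnatr_eq0 -lt0n fact_gt0.
by rewrite /expect -!natr_sum invf_div mulrA divfK.
Qed.

Lemma ratio_sub1_le (R : numFieldType) (D S c d : nat) :
  (0 < D)%N -> (0 < d)%N -> (D <= S)%N -> ((S - D) * d <= c * D)%N ->
  `|S%:R / D%:R - 1| <= c%:R / d%:R :> R.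
Proof.
move=> D_gt0 d_gt0 le_DS gap.
have D_neq0 : D%:R != 0 :> R by rewrite pnatr_eq0 -lt0n.
have -> : S%:R / D%:R - 1 = (S - D)%:R / D%:R :> R by rewrite natrB // mulrBl divff.
rewrite ger0_norm ?divr_ge0 ?ler0n //.
by rewrite ler_pdivrMr ?ltr0n // mulrAC ler_pdivlMr ?ltr0n // -!natrM ler_nat.
Qed.

Theorem proposition2 :
  (forall (n : nat) (pi : 'S_n.+1),
      valid pi (sweep pi) /\
      (forall plan : seq 'I_n.+1, valid pi plan -> (size (sweep pi) <= size plan)%N))
  /\
  (forall eps : rat, 0 < eps ->
     exists M : nat, forall n : nat, (M <= n)%N ->
       `| expect (fun pi : 'S_n.+1 => travel (sweep pi))
            / expect (fun pi : 'S_n.+1 => Dstar pi) - 1 | < eps).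
Proof.
split=> [n pi | eps eps_gt0].
  by have [valid_sweep _ _] := sweep_spec pi; split=> // plan; apply: sweep_size_le.
have bound_gt := archi_boundP (ltW (divr_gt0 (ltr0n _ 6) eps_gt0)).
exists (Num.bound (6 / eps)).+1 => n le_bound; rewrite expect_ratio.
have Dstar_gt0 := sum_Dstar_gt0 (leq_trans (ltn0Sn _) le_bound).
apply: le_lt_trans (@ratio_sub1_le rat _ _ _ _ Dstar_gt0 (ltn0Sn _)
  (sum_Dstar_le_travel_sweep n) (sum_travel_sweep_gap n)) _.
rewrite ltr_pdivrMr ?ltr0n // mulrC -ltr_pdivrMr //.
apply: lt_le_trans bound_gt _; rewrite ler_nat.
exact: leq_trans (ltnW le_bound) (leqW (leqnSn n)).
Qed.
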